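(* Let $\tau$ be a strongly $(n,p;a,c)$ regular graph with $0<c<p<n-1$, whose adjacency matrix has eigenvalues $p$, $r$ and $s$, where $r=\frac{a-c+\sqrt{(a-c)^2+4(p-c)}}{2}$ and $s=\frac{a-c-\sqrt{(a-c)^2+4(p-c)}}{2}$. Then: (1) for every odd positive integer $k$: $(rn+p-r)^k+(-n+p-r)^k p+(p-r)^k(n-p-1)\ge 0$; (2) for every odd positive integer $k$: $(rn+p-s)^k+(-n+p-s)^k p+(p-s)^k(n-p-1)\ge 0$; (3) for all positive integers $k,l$ with $k+l$ odd: $(rn+p-r)^k(rn+p-s)^l+(-n+p-r)^k(-n+p-s)^l p+(p-r)^k(p-s)^l(n-p-1)\ge 0$; (4) for every positive integer $k$ and every odd positive integer $l$: $(|s|n+s-p)^k(rn+p-s)^l+(n+s-p)^k(-n+p-s)^l p+(s-p)^k(p-s)^l(n-p-1)\ge 0$.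
   Context: A graph is strongly $(n,p;a,c)$ regular if it is a simple graph on $n$ vertices, not complete and not null, every vertex has exactly $p$ neighbours, every pair of adjacent vertices has exactly $a$ common neighbours, and every pair of distinct non-adjacent vertices has exactly $c$ common neighbours. *)

From mathcomp Require Import all_boot all_order all_algebra.
Set Implicit Arguments. Unset Strict Implicit. Unset Printing Implicit Defensive.
Import Order.TTheory GRing.Theory Num.Theory.

Definition simple_graph (T : finType) (e : rel T) : Prop :=
  (forall x y, e x y = e y x) /\ (forall x, ~~ e x x).

Definition strongly_regular (T : finType) (e : rel T) (n p a c : nat) : Prop :=
  simple_graph e /\
  #|T| = n /\
  (exists x y, x != y /\ ~~ e x y) /\
  (exists x y, e x y) /\
  (forall x, #|[set y | e x y]| = p) /\
  (forall x y, e x y -> #|[set z | e x z && e y z]| = a) /\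
  (forall x y, x != y -> ~~ e x y -> #|[set z | e x z && e y z]| = c).

Local Open Scope ring_scope.

Definition srg_r (R : rcfType) (p a c : nat) : R :=
  ((a%:R - c%:R) + Num.sqrt ((a%:R - c%:R) ^+ 2 + 4 * (p%:R - c%:R))) / 2.
Definition srg_s (R : rcfType) (p a c : nat) : R :=
  ((a%:R - c%:R) - Num.sqrt ((a%:R - c%:R) ^+ 2 + 4 * (p%:R - c%:R))) / 2.

From mathcomp Require Import all_boot all_order all_algebra ring lra.
Set Implicit Arguments. Unset Strict Implicit. Unset Printing Implicit Defensive.
Import Order.TTheory GRing.Theory Num.Theory.
Local Open Scope ring_scope.

(* Let A be the adjacency matrix and J the all-ones matrix. For an eigenvalue
   t of A other than p, the matrix M(t) = n (t I - A) + (p - t) J satisfies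
   M(t)^2 = n (2 t - (a - c)) M(t), so M(r) and -M(s) are positive
   semidefinite, and so is M(r) + (r - s) J. By the Schur product theorem the
   entrywise powers and products of these matrices stay positive semidefinite,
   hence have a nonnegative sum of entries; for a matrix with diagonal entries
   d, entries b on edges and o on non-edges that sum is
   n (d + b p + o (n - p - 1)). *)

Section Gram.
Variables (R : realDomainType) (T : finType).

Definition gram (K : T -> T -> R) : Prop :=
  exists (U : finType) (w : U -> R) (f : T -> U -> R),
    (forall u, 0 <= w u) /\ K =2 (fun x y => \sum_u w u * (f x u * f y u)).

Lemma eq_gram (K1 K2 : T -> T -> R) : K1 =2 K2 -> gram K1 -> gram K2.
Proof.
by move=> eK [U [w [f [w_ge0 defK]]]]; exists U, w, f; split=> // x y; rewrite -eK.
Qed.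

Lemma gram_dot (U : finType) (f : T -> U -> R) :
  gram (fun x y => \sum_u f x u * f y u).
Proof. by exists U, (fun _ => 1), f; split=> // x y; apply: eq_bigr => u _; rewrite mul1r. Qed.

Lemma gram_cst (k : R) : 0 <= k -> gram (fun _ _ => k).
Proof.
move=> k_ge0; exists unit, (fun _ => k), (fun _ _ => 1); split=> // x y.
by rewrite (big_pred1 tt) ?mulr1 // => -[].
Qed.

Lemma gramD (K1 K2 : T -> T -> R) :
  gram K1 -> gram K2 -> gram (fun x y => K1 x y + K2 x y).
Proof.
move=> [U1 [w1 [f1 [w1_ge0 def1]]]] [U2 [w2 [f2 [w2_ge0 def2]]]].
exists (U1 + U2)%type, (fun u => match u with inl i => w1 i | inr j => w2 j end),
  (fun x u => match u with inl i => f1 x i | inr j => f2 x j end); split; first by case.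
by move=> x y; rewrite big_sumType def1 def2.
Qed.

Lemma gramM (K1 K2 : T -> T -> R) :
  gram K1 -> gram K2 -> gram (fun x y => K1 x y * K2 x y).
Proof.
move=> [U1 [w1 [f1 [w1_ge0 def1]]]] [U2 [w2 [f2 [w2_ge0 def2]]]].
exists (U1 * U2)%type, (fun u => w1 u.1 * w2 u.2),
  (fun x u => f1 x u.1 * f2 x u.2); split=> [u|x y]; first exact: mulr_ge0.
rewrite def1 def2 mulr_suml.
rewrite -(pair_bigA _ (fun i j => w1 i * w2 j * (f1 x i * f2 x j * (f1 y i * f2 y j)))).
apply: eq_bigr => i _.
by rewrite mulr_sumr; apply: eq_bigr => j _; ring.
Qed.

Lemma gramX (K : T -> T -> R) k : gram K -> gram (fun x y => K x y ^+ k).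
Proof.
move=> gK; elim: k => [|k IHk].
  by apply: eq_gram (gram_cst ler01) => x y; rewrite expr0.
by apply: eq_gram (gramM gK IHk) => x y; rewrite exprS.
Qed.

Lemma gram_sum_ge0 (K : T -> T -> R) : gram K -> 0 <= \sum_x \sum_y K x y.
Proof.
move=> [U [w [f [w_ge0 defK]]]].
have -> : \sum_x \sum_y K x y = \sum_u w u * (\sum_x f x u) ^+ 2.
  under eq_bigr do under eq_bigr do rewrite defK.
  under eq_bigr do rewrite exchange_big.
  rewrite exchange_big; apply: eq_bigr => u _.
  rewrite expr2 big_distrlr mulr_sumr; apply: eq_bigr => x _.
  by rewrite mulr_sumr.
by apply: sumr_ge0 => u _; rewrite mulr_ge0 ?sqr_ge0.
Qed.

End Gram.

Section IndicatorSums.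
Variables (R : nzSemiRingType) (T : finType).

Lemma sum_indicator (P : pred T) : \sum_z (P z)%:R = #|[set z | P z]|%:R :> R.
Proof.
rewrite -sum1_card natr_sum [RHS]big_mkcond /=.
by apply: eq_bigr => z _; rewrite inE; case: (P z).
Qed.

Lemma sum_delta (x : T) (g : T -> R) : \sum_z (x == z)%:R * g z = g x.
Proof.
rewrite (bigD1 x) //= eqxx mul1r big1 ?addr0 // => z.
by rewrite eq_sym => /negbTE ->; rewrite mul0r.
Qed.

Lemma sum_delta1 (x : T) : \sum_z (x == z)%:R = 1 :> R.
Proof.
rewrite sum_indicator (_ : [set z | x == z] = [set x]) ?cards1 //.
by apply/setP=> z; rewrite !inE eq_sym.
Qed.

End IndicatorSums.

Section StronglyRegular.
Variables (R : realFieldType) (T : finType) (e : rel T) (n p a c : nat).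
Hypotheses (e_sym : forall x y, e x y = e y x) (e_irr : forall x, ~~ e x x).
Hypotheses (card_T : #|T| = n) (deg_p : forall x, #|[set y | e x y]| = p).
Hypothesis adj_common : forall x y, e x y -> #|[set z | e x z && e y z]| = a.
Hypothesis nonadj_common :
  forall x y, x != y -> ~~ e x y -> #|[set z | e x z && e y z]| = c.

(* The matrices [d I + b A + o (J - I - A)] of the Bose-Mesner algebra. *)
Definition assoc_fun (d b o : R) (x y : T) : R :=
  if x == y then d else if e x y then b else o.

Lemma assoc_funE d b o x y :
  assoc_fun d b o x y = (d - o) * (x == y)%:R + (b - o) * (e x y)%:R + o.
Proof.
rewrite /assoc_fun; case: eqVneq => [<-|_]; first rewrite (negbTE (e_irr x)) /=.
  by ring.
by case: (e x y) => /=; ring.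
Qed.

Lemma gram_assoc_cst k : 0 <= k -> gram (assoc_fun k k k).
Proof.
by move=> k_ge0; apply: eq_gram (gram_cst T k_ge0) => x y; rewrite /assoc_fun !if_same.
Qed.

Lemma gram_assocD d b o d' b' o' :
  gram (assoc_fun d b o) -> gram (assoc_fun d' b' o') ->
  gram (assoc_fun (d + d') (b + b') (o + o')).
Proof.
move=> g1 g2; apply: eq_gram (gramD g1 g2) => x y.
by rewrite /assoc_fun; case: (x == y); case: (e x y).
Qed.

Lemma gram_assocM d b o d' b' o' :
  gram (assoc_fun d b o) -> gram (assoc_fun d' b' o') ->
  gram (assoc_fun (d * d') (b * b') (o * o')).
Proof.
move=> g1 g2; apply: eq_gram (gramM g1 g2) => x y.
by rewrite /assoc_fun; case: (x == y); case: (e x y).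
Qed.

Lemma gram_assocX d b o k :
  gram (assoc_fun d b o) -> gram (assoc_fun (d ^+ k) (b ^+ k) (o ^+ k)).
Proof.
move=> g; apply: eq_gram (gramX k g) => x y.
by rewrite /assoc_fun; case: (x == y); case: (e x y).
Qed.

Lemma sum_adj x : \sum_z (e x z)%:R = p%:R :> R.
Proof. by rewrite sum_indicator deg_p. Qed.

Lemma sum_adj_mul x y :
  \sum_z (e x z)%:R * (e y z)%:R = assoc_fun p%:R a%:R c%:R x y.
Proof.
under eq_bigr do rewrite -natrM mulnb.
rewrite sum_indicator /assoc_fun; case: eqVneq => [<-|neq_xy].
  by rewrite -(deg_p x); congr _%:R; apply: eq_card => z; rewrite !inE andbb.
by case: ifPn => [/adj_common|/(nonadj_common neq_xy)] ->.
Qed.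

Lemma sum_assoc_fun d b o x :
  \sum_y assoc_fun d b o x y = d + b * p%:R + o * (n%:R - p%:R - 1).
Proof.
under eq_bigr do rewrite assoc_funE.
rewrite !big_split /= -!mulr_sumr sum_delta1 sum_adj sumr_const card_T.
by rewrite -mulr_natr; ring.
Qed.

Hypothesis n_gt0 : (0 < n)%N.

Lemma gram_assoc_ge0 d b o :
  gram (assoc_fun d b o) -> 0 <= d + b * p%:R + o * (n%:R - p%:R - 1).
Proof.
move/gram_sum_ge0; under eq_bigr do rewrite sum_assoc_fun.
by rewrite sumr_const card_T pmulrn_lge0.
Qed.

(* Count the paths x - z - y of length two from a fixed x in two ways. *)
Lemma srg_param_identity :
  p%:R ^+ 2 = p%:R + a%:R * p%:R + c%:R * (n%:R - p%:R - 1) :> R.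
Proof.
have /card_gt0P[x _] : (0 < #|T|)%N by rewrite card_T.
rewrite -(sum_assoc_fun _ _ _ x).
under eq_bigr do rewrite -sum_adj_mul.
rewrite exchange_big /=.
under eq_bigr do rewrite -mulr_sumr.
under eq_bigr do (under eq_bigr do rewrite e_sym; rewrite sum_adj).
by rewrite -mulr_suml sum_adj expr2.
Qed.

Lemma sum_lin_mul (al be ga : R) x y :
  \sum_z (al * (x == z)%:R + be * (e x z)%:R + ga)
         * (al * (y == z)%:R + be * (e y z)%:R + ga)
  = assoc_fun (al ^+ 2 + be ^+ 2 * p%:R + 2 * ga * (al + be * p%:R) + ga ^+ 2 * n%:R)
              (2 * al * be + be ^+ 2 * a%:R + 2 * ga * (al + be * p%:R) + ga ^+ 2 * n%:R)
              (be ^+ 2 * c%:R + 2 * ga * (al + be * p%:R) + ga ^+ 2 * n%:R) x y.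
Proof.
have expand z : (al * (x == z)%:R + be * (e x z)%:R + ga)
                * (al * (y == z)%:R + be * (e y z)%:R + ga)
  = al ^+ 2 * ((x == z)%:R * (y == z)%:R) + al * be * ((x == z)%:R * (e y z)%:R)
    + al * be * ((y == z)%:R * (e x z)%:R) + be ^+ 2 * ((e x z)%:R * (e y z)%:R)
    + al * ga * (x == z)%:R + al * ga * (y == z)%:R
    + be * ga * (e x z)%:R + be * ga * (e y z)%:R + ga ^+ 2 * 1.
  by ring.
under eq_bigr do rewrite expand.
rewrite !big_split /= -!mulr_sumr !sum_delta !sum_delta1 sum_adj_mul !sum_adj.
rewrite sumr_const card_T (e_sym y x) [y == x]eq_sym -mulr_natr /assoc_fun.
case: eqVneq => [<-|_]; first by rewrite (negbTE (e_irr x)) /=; ring.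
by case: (e x y) => /=; ring.
Qed.

(* With [M := n (t I - A) + (p - t) J], whose entries are the three arguments
   of [assoc_fun] below divided by [m], the identity [M ^+ 2 = m M] holds;
   so [M], being symmetric, is proportional to its own Gram matrix. *)
Lemma gram_eigen (t : R) : t ^+ 2 = (a%:R - c%:R) * t + (p%:R - c%:R) ->
  let m := n%:R * (2 * t - (a%:R - c%:R)) in
  gram (assoc_fun (m * (t * n%:R + p%:R - t)) (m * (- n%:R + p%:R - t)) (m * (p%:R - t))).
Proof.
move=> t_root m; have srg_identity := srg_param_identity.
apply: eq_gram (gram_dot (fun x z => n%:R * t * (x == z)%:R + - n%:R * (e x z)%:R + (p%:R - t))).
by move=> x y; rewrite sum_lin_mul /m; congr assoc_fun; ring: t_root srg_identity.
Qed.

Lemma gram_eigen_pos (t : R) : t ^+ 2 = (a%:R - c%:R) * t + (p%:R - c%:R) ->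
  0 < 2 * t - (a%:R - c%:R) ->
  gram (assoc_fun (t * n%:R + p%:R - t) (- n%:R + p%:R - t) (p%:R - t)).
Proof.
move=> t_root gap; set m := n%:R * (2 * t - (a%:R - c%:R)).
have m_gt0 : 0 < m by rewrite mulr_gt0 ?ltr0n.
have minv_ge0 : 0 <= m^-1 by rewrite invr_ge0 ltW.
have := gram_assocM (gram_assoc_cst minv_ge0) (gram_eigen t_root).
by rewrite -/m !mulKf ?gt_eqF.
Qed.

Lemma gram_eigen_neg (t : R) : t ^+ 2 = (a%:R - c%:R) * t + (p%:R - c%:R) ->
  2 * t - (a%:R - c%:R) < 0 ->
  gram (assoc_fun (- t * n%:R + t - p%:R) (n%:R + t - p%:R) (t - p%:R)).
Proof.
move=> t_root gap; set m := n%:R * (2 * t - (a%:R - c%:R)).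
have m_lt0 : m < 0 by rewrite pmulr_rlt0 ?ltr0n.
have minv_le0 : 0 <= - m^-1 by rewrite oppr_ge0 invr_le0 ltW.
set E := assoc_fun _ _ _.
suff -> : E = assoc_fun (- m^-1 * (m * (t * n%:R + p%:R - t)))
                        (- m^-1 * (m * (- n%:R + p%:R - t))) (- m^-1 * (m * (p%:R - t))).
  exact: gram_assocM (gram_assoc_cst minv_le0) (gram_eigen t_root).
by rewrite /E !mulNr !mulKf ?lt_eqF //; congr assoc_fun; ring.
Qed.

End StronglyRegular.

Lemma quadratic_formula (F : numFieldType) (b k q : F) :
  q ^+ 2 = b ^+ 2 + 4 * k -> ((b + q) / 2) ^+ 2 = b * ((b + q) / 2) + k.
Proof. by move=> q2; rewrite expr_div_n sqrrD q2; field. Qed.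

Section SrgEigenvalues.
Variables (R : rcfType) (p a c : nat).
Hypothesis c_lt_p : (c < p)%N.

Local Notation discr := ((a%:R - c%:R) ^+ 2 + 4 * (p%:R - c%:R) : R).

Lemma srg_discr_gt0 : 0 < discr.
Proof. by rewrite ltr_wpDl ?sqr_ge0 // mulr_gt0 // subr_gt0 ltr_nat. Qed.

Lemma srg_r_root :
  srg_r R p a c ^+ 2 = (a%:R - c%:R) * srg_r R p a c + (p%:R - c%:R).
Proof. by apply: quadratic_formula; rewrite sqr_sqrtr // ltW ?srg_discr_gt0. Qed.

Lemma srg_s_root :
  srg_s R p a c ^+ 2 = (a%:R - c%:R) * srg_s R p a c + (p%:R - c%:R).
Proof. by apply: quadratic_formula; rewrite sqrrN sqr_sqrtr // ltW ?srg_discr_gt0. Qed.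

Lemma srg_r_gap : 0 < 2 * srg_r R p a c - (a%:R - c%:R).
Proof.
have -> : 2 * srg_r R p a c - (a%:R - c%:R) = Num.sqrt discr by rewrite /srg_r; field.
by rewrite sqrtr_gt0 srg_discr_gt0.
Qed.

Lemma srg_s_gap : 2 * srg_s R p a c - (a%:R - c%:R) < 0.
Proof.
have -> : 2 * srg_s R p a c - (a%:R - c%:R) = - Num.sqrt discr by rewrite /srg_s; field.
by rewrite oppr_lt0 sqrtr_gt0 srg_discr_gt0.
Qed.

Lemma srg_s_lt0 : srg_s R p a c < 0.
Proof.
rewrite /srg_s pmulr_llt0 ?invr_gt0 // subr_lt0.
rewrite (le_lt_trans (ler_norm _)) // -sqrtr_sqr ltr_sqrt ?srg_discr_gt0 //.
by rewrite ltr_pwDr ?mulr_gt0 // subr_gt0 ltr_nat.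
Qed.

End SrgEigenvalues.

Theorem mainTheorem3 (R : rcfType) (T : finType) (e : rel T) (n p a c : nat) :
  strongly_regular e n p a c ->
  (0 < c)%N -> (c < p)%N -> (p < n - 1)%N ->
  let r : R := srg_r R p a c in
  let s : R := srg_s R p a c in
  let nR : R := n%:R in
  let pR : R := p%:R in
  [/\ (forall k : nat, odd k ->
         0 <= (r * nR + pR - r) ^+ k + (- nR + pR - r) ^+ k * pR
              + (pR - r) ^+ k * (nR - pR - 1)),
      (forall k : nat, odd k ->
         0 <= (r * nR + pR - s) ^+ k + (- nR + pR - s) ^+ k * pR
              + (pR - s) ^+ k * (nR - pR - 1)),
      (forall k l : nat, (0 < k)%N -> (0 < l)%N -> odd (k + l) ->
         0 <= (r * nR + pR - r) ^+ k * (r * nR + pR - s) ^+ l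
              + (- nR + pR - r) ^+ k * (- nR + pR - s) ^+ l * pR
              + (pR - r) ^+ k * (pR - s) ^+ l * (nR - pR - 1))
    & (forall k l : nat, (0 < k)%N -> odd l ->
         0 <= (`|s| * nR + s - pR) ^+ k * (r * nR + pR - s) ^+ l
              + (nR + s - pR) ^+ k * (- nR + pR - s) ^+ l * pR
              + (s - pR) ^+ k * (pR - s) ^+ l * (nR - pR - 1))].
Proof.
move=> [[e_sym e_irr] [card_T [_ [_ [deg_p [adj_common nonadj_common]]]]]] _ c_lt_p p_lt_n.
move=> r s nR pR.
have n_gt0 : (0 < n)%N := leq_trans (leq_ltn_trans (leq0n p) p_lt_n) (leq_subr 1 n).
have ge0 := gram_assoc_ge0 e_irr card_T deg_p n_gt0.
have G_r := gram_eigen_pos e_sym e_irr card_T deg_p adj_common nonadj_common n_gt0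
  (srg_r_root R a c_lt_p) (srg_r_gap R a c_lt_p).
have G_s := gram_eigen_neg e_sym e_irr card_T deg_p adj_common nonadj_common n_gt0
  (srg_s_root R a c_lt_p) (srg_s_gap R a c_lt_p).
have r_ge_s : 0 <= r - s.
  by have := srg_r_gap R a c_lt_p; have := srg_s_gap R a c_lt_p; rewrite -/r -/s; lra.
have G_rs : gram (assoc_fun e (r * nR + pR - s) (- nR + pR - s) (pR - s)).
  by have := gram_assocD G_r (gram_assoc_cst e r_ge_s); rewrite !subrKA.
split=> [k _|k _|k l _ _ _|k l _ _].
- exact: ge0 (gram_assocX k G_r).
- exact: ge0 (gram_assocX k G_rs).
- exact: ge0 (gram_assocM (gram_assocX k G_r) (gram_assocX l G_rs)).
- rewrite ltr0_norm ?srg_s_lt0 //.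
  exact: ge0 (gram_assocM (gram_assocX k G_s) (gram_assocX l G_rs)).
Qed.
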